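(* Under the standing assumptions (all robots have the same turning radius $r$; the group allocation satisfies the distinctness conditions, which is possible with $m=\lceil\log_2(n+2)\rceil+1$ groups; $G_m=\emptyset$), the following hold. (i) For every initial state, every robot $k$ and every vector $v\in\mathbb R^2$, there is a finite activation sequence whose net effect translates robot $k$ by $v$ and leaves the positions of all other robots unchanged. (ii) Consequently the swarm, with inputs $u$ measurable and taking values in $(0,\infty)$, is small-time locally controllable in positions at every initial state $(p_0,\Theta_0)$: $p_0$ lies in the interior of $\mathcal R_{(p_0,\Theta_0)}(T)$ for every $T>0$.
   Context: A swarm of $n$ planar robots; robot $j$ has state $(x_j,y_j,\theta_j)$, $\theta_j$ mod $2\pi$; all robots have the same turning radius $r>0$. Groups $G_1,\dots,G_m$ with activation vectors $\alpha_i\in\{0,1\}^n$ ($\alpha_{i,j}=1$ iff robot $j\in G_i$); standing assumptions: the patterns $(\alpha_{1,j},\dots,\alpha_{m-1,j})$, $j=1,\dots,n$, are pairwise distinct, none all zeros and none all ones, and $G_m=\emptyset$. Dynamics: a switching signal $\nu(t)\in\{1,\dots,m\}$ selects the active group and a scalar input $u(t)>0$ is applied; with $a_j=\alpha_{\nu(t),j}$, robot $j$ obeys $\dot x_j=a_j\cos\theta_j\,u$, $\dot y_j=a_j\sin\theta_j\,u$, $\dot\theta_j=(1-a_j)u/r$ (members of the active group translate forward, all others rotate counterclockwise in place). Write $p=(x_1,y_1,\dots,x_n,y_n)\in\mathbb R^{2n}$ for the positions and $\Theta=(\theta_1,\dots,\theta_n)$ for the orientations. $\mathcal R_{(p_0,\Theta_0)}(T)$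 is the set of all position vectors $p(t)$, $0\le t\le T$, reachable by trajectories starting at $(p_0,\Theta_0)$. The system is small-time locally controllable (STLC) in positions at $(p_0,\Theta_0)$ if $p_0$ is in the interior of $\mathcal R_{(p_0,\Theta_0)}(T)$ for all $T>0$. *)

From HB Require Import structures.
From mathcomp Require Import all_boot all_order all_algebra.
From mathcomp Require Import all_classical all_reals all_analysis.
Set Implicit Arguments. Unset Strict Implicit. Unset Printing Implicit Defensive.
Import Order.TTheory GRing.Theory Num.Theory numFieldNormedType.Exports.
Local Open Scope classical_set_scope.
Local Open Scope ring_scope.

(* Groups are indexed by 'I_m.+1 : the paper's G_1,...,G_m correspond to the
   ordinals 0..m (so the paper's "m" is our m.+1); the paper's G_m is ord_max.
   alpha i j = true iff robot j belongs to group i. *)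

Definition pattern (n m : nat) (alpha : 'I_m.+1 -> 'I_n -> bool) (j : 'I_n)
  : {ffun 'I_m -> bool} :=
  [ffun i : 'I_m => alpha (widen_ord (leqnSn m) i) j].

Definition standing_assumptions (n m : nat) (alpha : 'I_m.+1 -> 'I_n -> bool)
  : Prop :=
  [/\ injective (pattern alpha),
      (forall j, exists i, pattern alpha j i),
      (forall j, exists i, ~~ pattern alpha j i)
    & (forall j, alpha ord_max j = false)].

Definition state (R : realType) (n : nat) :=
  (('I_n -> R) * ('I_n -> R) * ('I_n -> R))%type.

(* Exact net effect of activating group i with input of integral tau > 0
   (i.e. the solution of the dynamics with nu = i over an interval on which
   the integral of u equals tau): members translate by tau along their
   heading, non-members rotate in place by tau / r. *)
Definition step (R : realType) (n M : nat) (alpha : 'I_M -> 'I_n -> bool)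
  (r : R) (i : 'I_M) (tau : R) (s : state R n) : state R n :=
  let: (x, y, th) := s in
  (fun j => x j + (alpha i j)%:R * tau * cos (th j),
   fun j => y j + (alpha i j)%:R * tau * sin (th j),
   fun j => th j + (1 - (alpha i j)%:R) * tau / r).

Definition run (R : realType) (n M : nat) (alpha : 'I_M -> 'I_n -> bool)
  (r : R) (acts : seq ('I_M * R)) (s : state R n) : state R n :=
  foldl (fun s a => step alpha r a.1 a.2 s) s acts.

(* Switching signal on [0,T]: piecewise constant with finitely many
   switching times ts (values at switching times are irrelevant). *)
Definition switching_signal (R : realType) (M : nat) (T : R) (nu : R -> 'I_M)
  : Prop :=
  exists ts : seq R, forall t1 t2 : R, 0 <= t1 -> t1 <= t2 -> t2 <= T ->
    (forall s, s \in ts -> ~ (t1 <= s <= t2)) -> nu t1 = nu t2.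

(* Admissible input on [0,T]: measurable, with values in (0, oo), and
   (Lebesgue) integrable so that the dynamics has Caratheodory solutions. *)
Definition admissible_input (R : realType) (T : R) (u : R -> R) : Prop :=
  [/\ measurable_fun `[0, T] u,
      (forall t, 0 <= t <= T -> 0 < u t)
    & (@lebesgue_measure R).-integrable `[0, T] (EFin \o u)].

(* (x, y, th) is a (Caratheodory) solution on [0,T] of
     xdot_j = a_j cos th_j u, ydot_j = a_j sin th_j u, thdot_j = (1-a_j) u / r,
   a_j = alpha (nu t) j, from (x0, y0, th0). *)
Definition is_trajectory (R : realType) (n M : nat)
  (alpha : 'I_M -> 'I_n -> bool) (r T : R) (nu : R -> 'I_M) (u : R -> R)
  (x0 y0 th0 : 'I_n -> R) (x y th : R -> 'I_n -> R) : Prop :=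
  forall t, 0 <= t <= T -> forall j : 'I_n,
    [/\ th t j = th0 j + Rintegral (@lebesgue_measure R) `[0, t]
                   (fun s => (1 - (alpha (nu s) j)%:R) * u s / r),
        x t j = x0 j + Rintegral (@lebesgue_measure R) `[0, t]
                   (fun s => (alpha (nu s) j)%:R * cos (th s j) * u s)
      & y t j = y0 j + Rintegral (@lebesgue_measure R) `[0, t]
                   (fun s => (alpha (nu s) j)%:R * sin (th s j) * u s)].

(* Position vector p = (x_1,y_1,...,x_n,y_n), stored as an n x 2 matrix
   (row j = (x_j, y_j)); 'M[R]_(n,2) carries the standard topology of R^{2n}. *)
Definition posmx (R : realType) (n : nat) (x y : 'I_n -> R) : 'M[R]_(n, 2) :=
  \matrix_(j, k) if k == 0 then x j else y j.

Definition reachable (R : realType) (n M : nat) (alpha : 'I_M -> 'I_n -> bool)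
  (r : R) (x0 y0 th0 : 'I_n -> R) (T : R) : set 'M[R]_(n, 2) :=
  [set p | exists (nu : R -> 'I_M) (u : R -> R) (x y th : R -> 'I_n -> R) (t : R),
     [/\ switching_signal T nu, admissible_input T u,
         is_trajectory alpha r T nu u x0 y0 th0 x y th,
         0 <= t <= T & p = posmx (x t) (y t)]].

Definition STLC_positions (R : realType) (n M : nat)
  (alpha : 'I_M -> 'I_n -> bool) (r : R) (x0 y0 th0 : 'I_n -> R) : Prop :=
  forall T : R, 0 < T -> interior (reachable alpha r x0 y0 th0 T) (posmx x0 y0).

(* A robot's net motion under an activation sequence depends only on its
   membership pattern and, in the frame of its initial heading, not on the
   initial state.  Activating the empty group turns every robot by the same
   angle; with it one builds sequences with net heading change a multiple of
   2 pi in which one group advances, and maneuvers that turn by an extra pi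
   exactly the robots whose membership in a given group differs from a
   prescribed bit.  Running a sequence twice around such a maneuver doubles
   the displacement of the robots with the prescribed bit and cancels it for
   the others.  Filtering by every group isolates a single membership
   pattern, hence, by distinctness, a single robot, which can so be
   translated alone by any vector.  As inputs are unbounded, any activation
   sequence is executed in any time T > 0 by a piecewise constant switching
   signal with constant input, so every position is reachable in time T. *)

From HB Require Import structures.
From mathcomp Require Import all_boot all_order all_algebra.
From mathcomp Require Import all_classical all_reals all_analysis.
From mathcomp Require Import ring lra.
Import Order.TTheory GRing.Theory Num.Theory numFieldNormedType.Exports.
Local Open Scope classical_set_scope.
Local Open Scope ring_scope.
Set Implicit Arguments. Unset Strict Implicit. Unset Printing Implicit Defensive.

Section Rotation.
Variable R : realType.

Definition rot (phi : R) (w : R * R) : R * R :=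
  (cos phi * w.1 - sin phi * w.2, sin phi * w.1 + cos phi * w.2).

Lemma rotD phi psi w : rot phi (rot psi w) = rot (phi + psi) w.
Proof. by rewrite /rot /= cosD sinD; congr (_, _); ring. Qed.

Lemma rotv0 phi : rot phi (0, 0) = (0, 0).
Proof. by rewrite /rot /= !mulr0 subr0 addr0. Qed.

Definition full_turn (phi : R) := cos phi = 1 /\ sin phi = 0.

Lemma rot_full_turn phi w : full_turn phi -> rot phi w = w.
Proof. by case=> c s; case: w => ? ?; rewrite /rot c s /=; congr (_, _); ring. Qed.

Lemma full_turn0 : full_turn 0.
Proof. by rewrite /full_turn cos0 sin0. Qed.

Lemma full_turn2pi : full_turn (pi *+ 2).
Proof. by rewrite /full_turn cos2pi sin2pi. Qed.

Lemma full_turnD phi psi : full_turn phi -> full_turn psi -> full_turn (phi + psi).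
Proof. by case=> c s [c' s']; rewrite /full_turn cosD sinD c s c' s'; split; ring. Qed.

Lemma full_turn_nat (N : nat) : full_turn (pi *+ 2 * N%:R).
Proof.
elim: N => [|N IH]; first by rewrite mulr0; exact: full_turn0.
by rewrite -[N.+1]addn1 natrD mulrDr mulr1; exact: full_turnD IH full_turn2pi.
Qed.

Lemma full_turn_complement (x : R) : exists2 rho, 0 < rho & full_turn (x + rho).
Proof.
have pi2 : 0 < (pi : R) *+ 2 by rewrite mulrn_wgt0 // pi_gt0.
pose N := Num.bound (`|x| / (pi *+ 2)).
have : `|x| < pi *+ 2 * N%:R.
  by rewrite -ltr_pdivrMl // mulrC archi_boundP // divr_ge0 // ltW.
exists (pi *+ 2 * N.+1%:R - x); last by rewrite addrC subrK; exact: full_turn_nat.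
move: (ler_norm x); rewrite -[N.+1]addn1 natrD mulrDr mulr1; lra.
Qed.

End Rotation.

Section ActivationSequences.
Variables (R : realType) (M : nat) (r : R) (idle : 'I_M).
Hypothesis r_gt0 : 0 < r.
Implicit Types (a : 'I_M -> bool) (s : seq ('I_M * R)).

(* One robot is described by its membership vector [a] (a i = it belongs to
   group i); [disp a s] is its displacement expressed in the frame of its
   initial heading and [turn a s] its change of heading. *)
Fixpoint disp a s : R * R :=
  if s is p :: s' then
    let b := (a p.1)%:R in
    let w := rot ((1 - b) * p.2 / r) (disp a s') in (b * p.2 + w.1, w.2)
  else (0, 0).

Fixpoint turn a s : R :=
  if s is p :: s' then (1 - (a p.1)%:R) * p.2 / r + turn a s' else 0.

Definition positive_acts s := all (fun p => 0 < p.2) s.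

Lemma positive_acts_cat s1 s2 :
  positive_acts s1 -> positive_acts s2 -> positive_acts (s1 ++ s2).
Proof. by rewrite /positive_acts all_cat => ->. Qed.

Lemma disp_cat a s1 s2 :
  disp a (s1 ++ s2) = ((disp a s1).1 + (rot (turn a s1) (disp a s2)).1,
                       (disp a s1).2 + (rot (turn a s1) (disp a s2)).2).
Proof.
elim: s1 => [|p s IH] /=.
  by case: (disp a s2) => ? ?; rewrite /rot cos0 sin0 /=; congr (_, _); ring.
by rewrite IH /= !cosD !sinD; congr (_, _); ring.
Qed.

Lemma turn_cat a s1 s2 : turn a (s1 ++ s2) = turn a s1 + turn a s2.
Proof. by elim: s1 => [|p s IH] /=; rewrite ?add0r // IH addrA. Qed.

Lemma disp_cat_full_turn a s1 s2 : full_turn (turn a s1) ->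
  disp a (s1 ++ s2) = ((disp a s1).1 + (disp a s2).1, (disp a s1).2 + (disp a s2).2).
Proof. by move=> f; rewrite disp_cat rot_full_turn. Qed.

Lemma full_turn_cat a s1 s2 :
  full_turn (turn a s1) -> full_turn (turn a s2) -> full_turn (turn a (s1 ++ s2)).
Proof. by move=> f1 f2; rewrite turn_cat; exact: full_turnD. Qed.

Lemma disp1 a i t : disp a [:: (i, t)] = ((a i)%:R * t, 0).
Proof. by rewrite /= /rot /=; congr (_, _); ring. Qed.

Lemma turn1 a i t : turn a [:: (i, t)] = (1 - (a i)%:R) * t / r.
Proof. by rewrite /= addr0. Qed.

Definition spin (rho : R) := [:: (idle, rho * r)].

Lemma disp_spin a rho : a idle = false -> disp a (spin rho) = (0, 0).
Proof. by move=> h; rewrite disp1 h mul0r. Qed.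

Lemma turn_spin a rho : a idle = false -> turn a (spin rho) = rho.
Proof. by move=> h; rewrite turn1 h subr0 mul1r mulrK // unitfE gt_eqF. Qed.

Lemma spin_positive rho : 0 < rho -> positive_acts (spin rho).
Proof. by move=> h; rewrite /positive_acts /= andbT mulr_gt0. Qed.

(* Members of group [l] go forward, turn back and return; all other robots
   turn by [rho] on top of two half turns. *)
Definition turn_outside (l : 'I_M) (rho : R) :=
  [:: (l, rho * r / 2)] ++ spin pi ++ [:: (l, rho * r / 2)] ++ spin pi.

Lemma disp_turn_outside a l rho : a idle = false -> disp a (turn_outside l rho) = (0, 0).
Proof.
move=> h; rewrite !disp_cat !disp_spin // !turn_spin // !disp1 !turn1.
by case: (a l); rewrite /rot /= ?subrr ?mul0r ?cos0 ?sin0 ?cospi ?sinpi;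
  congr (_, _); ring.
Qed.

Lemma turn_turn_outside a l rho : a idle = false ->
  turn a (turn_outside l rho) = (1 - (a l)%:R) * rho + pi *+ 2.
Proof.
by move=> h; rewrite !turn_cat !turn_spin // !turn1 mulr2n; field; rewrite gt_eqF.
Qed.

Lemma turn_outside_positive l rho : 0 < rho -> positive_acts (turn_outside l rho).
Proof.
move=> h; have hl : positive_acts [:: (l, rho * r / 2)].
  by rewrite /= andbT !divr_gt0 ?mulr_gt0.
have hpi := spin_positive (pi_gt0 R).
by do 3 apply: positive_acts_cat => //.
Qed.

Definition advance (i : 'I_M) (t rho : R) := (i, t) :: turn_outside i rho.

Lemma advanceE a i t rho : a idle = false -> full_turn (t / r + rho) ->
  disp a (advance i t rho) = ((a i)%:R * t, 0) /\ full_turn (turn a (advance i t rho)).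
Proof.
move=> h f; rewrite /advance -cat1s disp_cat turn_cat.
rewrite disp_turn_outside // turn_turn_outside //.
rewrite rotv0 disp1 turn1 /= !addr0; split => //; case: (a i).
  by rewrite subrr !mul0r !add0r; exact: full_turn2pi.
by rewrite /= subr0 !mul1r addrA; apply: full_turnD => //; exact: full_turn2pi.
Qed.

Definition flip_unless (b : 'I_M) (v : bool) :=
  spin (if v then pi *+ 2 else pi) ++ turn_outside b pi.

Lemma flip_unlessE a b v : a idle = false ->
  disp a (flip_unless b v) = (0, 0) /\
  exists2 q, full_turn q & turn a (flip_unless b v) = q + if a b == v then 0 else pi.
Proof.
move=> h; split.
  by rewrite disp_cat disp_spin // disp_turn_outside // rotv0 /=; congr (_, _); ring.
rewrite turn_cat turn_spin // turn_turn_outside //.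
case: v; case: (a b) => /=;
  [exists (pi *+ 2 * 2%:R) | exists (pi *+ 2 * 2%:R)
  | exists (pi *+ 2 * 1%:R) | exists (pi *+ 2 * 2%:R)];
  by [exact: full_turn_nat | rewrite mulr2n; ring].
Qed.

Lemma flip_unless_positive b v : positive_acts (flip_unless b v).
Proof.
apply: positive_acts_cat; last exact/turn_outside_positive/pi_gt0.
by apply: spin_positive; case: v; [apply: mulrn_wgt0 |]; exact: pi_gt0.
Qed.

(* Repeating [s] after a half turn cancels its displacement, after a full
   turn doubles it. *)
Definition select (b : 'I_M) (v : bool) s :=
  s ++ flip_unless b v ++ s ++ flip_unless b v.

Lemma selectE a b v s : a idle = false -> full_turn (turn a s) ->
  disp a (select b v s) = (if a b == v then ((disp a s).1 *+ 2, (disp a s).2 *+ 2)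
                           else (0, 0)) /\ full_turn (turn a (select b v s)).
Proof.
move=> h f; have [D [q fq E]] := flip_unlessE b v h.
rewrite /select; move: (flip_unless b v) D E => fl D E.
set e : R := if a b == v then 0 else pi in E.
split.
  rewrite !disp_cat D rotv0 /= !addr0 !add0r.
  have [-> ->] := f; rewrite E cosD sinD; have [-> ->] := fq.
  by rewrite /e; case: (a b == v); rewrite ?cos0 ?sin0 ?cospi ?sinpi;
    congr (_, _); rewrite ?mulr2n; ring.
rewrite !turn_cat E.
have -> : turn a s + (q + e + (turn a s + (q + e))) =
          turn a s + turn a s + (q + q) + (if a b == v then 0 else pi *+ 2).
  by rewrite /e; case: (a b == v); rewrite ?mulr2n; ring.
apply: full_turnD; first by apply: full_turnD; exact: full_turnD.
by case: (a b == v); [exact: full_turn0 | exact: full_turn2pi].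
Qed.

Definition select_all (l : seq ('I_M * bool)) s :=
  foldl (fun s p => select p.1 p.2 s) s l.

Definition matches a (l : seq ('I_M * bool)) := all (fun p => a p.1 == p.2) l.

Lemma select_allE a l s : a idle = false -> full_turn (turn a s) ->
  disp a (select_all l s) =
    (if matches a l then ((disp a s).1 * 2 ^+ size l, (disp a s).2 * 2 ^+ size l)
     else (0, 0))
  /\ full_turn (turn a (select_all l s)).
Proof.
elim: l s => [|p l IH] s h f /=; first by rewrite !expr0 !mulr1; case: (disp a s).
have [E1 f1] := selectE p.1 p.2 h f; have [-> f2] := IH _ h f1; split => //.
rewrite E1; case: (a p.1 == p.2) => /=; last by case: matches; rewrite //= !mul0r.
by case: matches => //; rewrite exprS /=; congr (_, _); rewrite mulr2n; ring.
Qed.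

Lemma select_all_positive l s : positive_acts s -> positive_acts (select_all l s).
Proof.
elim: l s => [|p l IH] s h //=; apply/IH.
have hf := flip_unless_positive p.1 p.2.
by apply: (positive_acts_cat h); apply: (positive_acts_cat hf); exact: positive_acts_cat.
Qed.

Lemma exists_selective_advance (i0 : 'I_M) l (t : R) : 0 < t ->
  exists2 s, positive_acts s & forall a, a idle = false ->
    disp a s = (if a i0 && matches a l then (t, 0) else (0, 0)) /\ full_turn (turn a s).
Proof.
move=> t0; have K0 : (0 : R) < 2 ^+ size l by rewrite exprn_gt0.
set t' := t / 2 ^+ size l; have [rho rho0 f] := full_turn_complement (t' / r).
exists (select_all l (advance i0 t' rho)).
  apply: select_all_positive; rewrite /advance -cat1s.
  by apply: positive_acts_cat; [rewrite /= andbT divr_gt0 | exact: turn_outside_positive].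
move=> a h; have [E1 f1] := advanceE i0 h f; have [-> f2] := select_allE l h f1.
split => //; rewrite E1 /=; case: (a i0); case: matches; rewrite //= ?mul0r //.
by rewrite mul1r divfK // gt_eqF.
Qed.

Lemma exists_rotated (phi : R) s : positive_acts s ->
  exists2 s', positive_acts s' & forall a, a idle = false -> full_turn (turn a s) ->
    disp a s' = rot phi (disp a s) /\ full_turn (turn a s').
Proof.
move=> ps; have [rho rho0 f] := full_turn_complement (- phi).
have [rho' rho'0 f'] := full_turn_complement rho.
exists (spin rho ++ s ++ spin rho').
  by apply: (positive_acts_cat (spin_positive rho0));
    apply: (positive_acts_cat ps); exact: spin_positive.
have Erho w : rot rho w = rot phi w.
  by rewrite -[rho](addrNK phi) -rotD rot_full_turn // addrC.
move=> a h fs; split.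
  rewrite !disp_cat !disp_spin // turn_spin // rotv0 Erho !addr0 !add0r.
  by case: (disp a s) => ? ?; case: (rot phi _).
rewrite !turn_cat !turn_spin //.
have -> : rho + (turn a s + rho') = turn a s + (rho + rho') by ring.
exact: full_turnD.
Qed.

Lemma exists_selective_move (i0 : 'I_M) l (t phi : R) : 0 < t ->
  exists2 s, positive_acts s & forall a, a idle = false ->
    disp a s = (if a i0 && matches a l then rot phi (t, 0) else (0, 0))
    /\ full_turn (turn a s).
Proof.
move=> t0; have [s1 p1 E1] := exists_selective_advance i0 l t0.
have [s p E] := exists_rotated phi p1; exists s => // a h.
have [D1 f1] := E1 a h; have [-> fs] := E a h f1; split => //.
by rewrite D1; case: (_ && _); rewrite ?rotv0.
Qed.

(* [w] is the sum of positive moves [w.1 + L], [w.2 + L], [L], [L] in the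
   directions 0, pi/2, pi and -pi/2. *)
Lemma exists_selective_translation (i0 : 'I_M) l (w : R * R) :
  exists2 s, positive_acts s & forall a, a idle = false ->
    disp a s = (if a i0 && matches a l then w else (0, 0)) /\ full_turn (turn a s).
Proof.
pose L := `|w.1| + `|w.2| + 1.
have L0 : 0 < L by rewrite ltr_pwDr // addr_ge0.
have w1L : 0 < w.1 + L.
  by have := ler_norm (- w.1); have := normr_ge0 w.2; rewrite normrN /L; lra.
have w2L : 0 < w.2 + L.
  by have := ler_norm (- w.2); have := normr_ge0 w.1; rewrite normrN /L; lra.
have [s1 p1 E1] := exists_selective_move i0 l 0 w1L.
have [s2 p2 E2] := exists_selective_move i0 l (pi / 2) w2L.
have [s3 p3 E3] := exists_selective_move i0 l pi L0.
have [s4 p4 E4] := exists_selective_move i0 l (- (pi / 2)) L0.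
exists (s1 ++ s2 ++ s3 ++ s4).
  by apply: (positive_acts_cat p1); apply: (positive_acts_cat p2);
    exact: positive_acts_cat.
move=> a h; have [D1 f1] := E1 a h; have [D2 f2] := E2 a h.
have [D3 f3] := E3 a h; have [D4 f4] := E4 a h.
split; last by do 3 apply: full_turn_cat => //.
rewrite !(disp_cat_full_turn _ f1, disp_cat_full_turn _ f2, disp_cat_full_turn _ f3).
rewrite D1 D2 D3 D4.
case: (_ && _); last by rewrite /= !addr0.
rewrite /rot /= cos0 sin0 cospi sinpi cosN sinN cos_pihalf sin_pihalf.
by apply: injective_projections => /=; ring.
Qed.

Lemma run_body_frame n (alpha : 'I_M -> 'I_n -> bool) acts x0 y0 th0 j :
  let w := disp (alpha^~ j) acts in
  [/\ (run alpha r acts (x0, y0, th0)).1.1 j = x0 j + (rot (th0 j) w).1,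
      (run alpha r acts (x0, y0, th0)).1.2 j = y0 j + (rot (th0 j) w).2
    & (run alpha r acts (x0, y0, th0)).2 j = th0 j + turn (alpha^~ j) acts].
Proof.
elim: acts x0 y0 th0 => [|p s IH] x0 y0 th0; first by rewrite /= /rot; split; ring.
rewrite [run _ _ _ _]/= -/(run alpha r s _) /step.
set x1 := fun _ => _; set y1 := fun _ => _; set th1 := fun _ => _.
case: (IH x1 y1 th1) => -> -> ->.
by rewrite /x1 /y1 /th1 /= /rot cosD sinD; split; ring.
Qed.

End ActivationSequences.

Section Translations.
Variables (R : realType) (n m : nat) (alpha : 'I_m.+1 -> 'I_n -> bool) (r : R).
Hypotheses (r_gt0 : 0 < r) (alpha_std : standing_assumptions alpha).

Definition membership (k : 'I_n) : seq ('I_m.+1 * bool) :=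
  [seq (i, alpha i k) | i <- enum 'I_m.+1].

Lemma matches_membership j k : matches (alpha^~ j) (membership k) = (j == k).
Proof.
case: alpha_std => inj_pattern _ _ _; apply/idP/eqP => [/allP same | ->]; last first.
  by apply/allP => _ /mapP[i _ ->]; rewrite /= eqxx.
apply: inj_pattern; apply/ffunP => i; rewrite !ffunE; apply/eqP.
exact: same (map_f _ (mem_enum _ _)).
Qed.

Lemma exists_single_translation x0 y0 th0 k (v : R * R) :
  exists2 acts, positive_acts acts & forall j,
    (run alpha r acts (x0, y0, th0)).1.1 j = x0 j + (if j == k then v.1 else 0) /\
    (run alpha r acts (x0, y0, th0)).1.2 j = y0 j + (if j == k then v.2 else 0).
Proof.
have [_ nonzero _ idle_empty] := alpha_std.
have [i0] := nonzero k; rewrite /pattern ffunE => k_in_i0.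
have [acts pos E] := exists_selective_translation ord_max r_gt0 (widen_ord (leqnSn m) i0)
  (membership k) (rot (- th0 k) v).
exists acts => // j; have [D _] := E (alpha^~ j) (idle_empty j).
have [-> -> _] := run_body_frame r alpha acts x0 y0 th0 j; rewrite D matches_membership.
have [->|_] := eqVneq j k; last by rewrite andbF rotv0 /= !addr0.
rewrite k_in_i0 rotD subrr (rot_full_turn _ (full_turn0 R)).
by split.
Qed.

Lemma exists_translation_on x0 y0 th0 (d : 'I_n -> R * R) (L : seq 'I_n) : uniq L ->
  exists2 acts, positive_acts acts & forall j,
    (run alpha r acts (x0, y0, th0)).1.1 j = x0 j + (if j \in L then (d j).1 else 0) /\
    (run alpha r acts (x0, y0, th0)).1.2 j = y0 j + (if j \in L then (d j).2 else 0).
Proof.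
elim: L x0 y0 th0 => [|k L IH] x0 y0 th0.
  by move=> _; exists [::] => // j /=; rewrite !addr0.
rewrite cons_uniq => /andP[kL uL].
have [a1 p1 E1] := exists_single_translation x0 y0 th0 k (d k).
case Er: (run alpha r a1 (x0, y0, th0)) E1 => [[x1 y1] th1] E1.
have [a2 p2 E2] := IH x1 y1 th1 uL.
exists (a1 ++ a2); first exact: positive_acts_cat.
move=> j; rewrite /run foldl_cat -/(run alpha r a1 _) Er -/(run alpha r a2 _).
have [-> ->] := E2 j; have [/= -> ->] := E1 j.
by rewrite in_cons; case: eqP => [->|_] /=; rewrite ?(negbTE kL) !addr0.
Qed.

End Translations.

Section PiecewiseConstantIntegrals.
Variable R : realType.
Local Notation mu := (@lebesgue_measure R).

Lemma integrable_set1 (f : R -> R) (x : R) : mu.-integrable [set x] (EFin \o f).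
Proof.
apply: null_set_integrable => //; first exact: measurable_fun_set1.
exact: lebesgue_measure_set1.
Qed.

Lemma integrable_cst_itv_oc (a b k : R) : mu.-integrable `]a, b] (EFin \o cst k).
Proof.
apply: measurable_bounded_integrable => //; last exact: bounded_cst.
have := lebesgue_measure_itv `]a, b]; rewrite /= => ->.
by case: ifP => // _; rewrite -EFinB ltry.
Qed.

Lemma Rintegral_cst_itv_oc (a b k : R) : a <= b ->
  Rintegral mu `]a, b] (fun _ => k) = k * (b - a).
Proof.
move=> ab; rewrite Rintegral_cst //.
have := lebesgue_measure_itv `]a, b]; rewrite /= => ->; rewrite lte_fin.
case: ltP => [_ | ba] //=.
have -> : b = a by apply/eqP; rewrite eq_le ab ba.
by rewrite subrr mulr0.
Qed.

Lemma integrable_setU2 (A B : set R) (f : R -> R) : measurable A -> measurable B ->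
  [disjoint A & B] -> mu.-integrable A (EFin \o f) -> mu.-integrable B (EFin \o f) ->
  mu.-integrable (A `|` B) (EFin \o f).
Proof.
move=> mA mB dAB /integrable_mkcond-/(_ mA) iA /integrable_mkcond-/(_ mB) iB.
apply/integrable_mkcond; first exact: measurableU.
apply: eq_integrable (integrableD measurableT iA iB) => //= x _.
have notAB : ~ (A x /\ B x).
  by move=> [xA xB]; move: dAB; rewrite disj_set2E => /eqP; apply/eqP/set0P; exists x.
rewrite /patch; have [xA | nA] := boolP (x \in A); have [xB | nB] := boolP (x \in B).
- by exfalso; apply: notAB; split; apply: set_mem.
- by rewrite mem_set /=; [rewrite adde0 | left; apply: set_mem].
- by rewrite mem_set /=; [rewrite add0e | right; apply: set_mem].
- rewrite memNset /= ?adde0 //.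
  by case=> h; [move/mem_set: h; apply/negP | move/mem_set: h; apply/negP].
Qed.

Lemma integral_extend_cst (f : R -> R) (b t v : R) : 0 <= b -> b <= t ->
  mu.-integrable `[0, b] (EFin \o f) -> (forall s, b < s <= t -> f s = v) ->
  mu.-integrable `[0, t] (EFin \o f) /\
  Rintegral mu `[0, t] f = Rintegral mu `[0, b] f + v * (t - b).
Proof.
move=> b0 bt ib fv.
have E : `[0, t]%classic = `[0, b]%classic `|` `]b, t]%classic :> set R.
  by apply: itv_bndbnd_setU; rewrite bnd_simp.
have dj : [disjoint `[0, b]%classic & `]b, t]%classic].
  rewrite disj_set2E; apply/eqP/seteqP; split => // x [] /=.
  rewrite !in_itv /= => /andP[_ xb] /andP[bx _].
  by move: (lt_le_trans bx xb); rewrite ltxx.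
have fv' : {in `]b, t]%classic, f =1 cst v}.
  by move=> s; rewrite inE /= in_itv /= => /andP[bs st]; rewrite fv // bs st.
have ioc : mu.-integrable `]b, t] (EFin \o f).
  by apply: eq_integrable (integrable_cst_itv_oc b t v) => // s /fv' /= ->.
have iU : mu.-integrable `[0, t] (EFin \o f) by rewrite E; exact: integrable_setU2.
split => //; rewrite E Rintegral_setU -?E //.
by congr (_ + _); rewrite -Rintegral_cst_itv_oc //; apply: eq_Rintegral.
Qed.

End PiecewiseConstantIntegrals.

Lemma count_iota_le (k N : nat) : (k <= N)%N ->
  count (fun l => (l <= k)%N) (iota 1 N) = k.
Proof.
move=> kN; rewrite -(subnKC kN) iotaD count_cat.
rewrite (eq_in_count (a2 := predT)); last first.
  by move=> l; rewrite mem_iota => /andP[_]; rewrite add1n ltnS => ->.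
rewrite count_predT size_iota (eq_in_count (a2 := pred0)) ?count_pred0 ?addn0 //.
move=> l; rewrite mem_iota => /andP[h _] /=; apply/negbTE.
by rewrite -ltnNge (leq_trans _ h) // add1n.
Qed.

Section Realization.
Variables (R : realType) (n m : nat) (alpha : 'I_m.+1 -> 'I_n -> bool) (r : R).
Hypothesis r_gt0 : 0 < r.
Variables (acts : seq ('I_m.+1 * R)) (T : R).
Hypotheses (acts_pos : positive_acts acts) (T_gt0 : 0 < T).
Variables x0 y0 th0 : 'I_n -> R.
Local Notation mu := (@lebesgue_measure R).
Local Notation K := (size acts).

Definition group_at k := (nth (ord0, 0) acts k).1.
Definition duration k := (nth (ord0, 0) acts k).2.

(* Activation [k] is run with the constant input [speed] on the interval
   (switch_time k, switch_time k.+1], whose index [signal] recovers by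
   counting the switching times below [s]; [speed] is large enough for the
   last switching time to be at most [T]. *)
Definition speed := (\sum_(0 <= k < K) duration k + 1) / T.
Definition switch_time k := (\sum_(0 <= l < k) duration l) / speed.
Definition signal (s : R) :=
  group_at (count (fun b => b < s) [seq switch_time k | k <- iota 1 K]).

Definition heading_rate j s := (1 - (alpha (signal s) j)%:R) * speed / r.
Definition heading t j := th0 j + Rintegral mu `[0, t] (heading_rate j).
Definition xrate j s := (alpha (signal s) j)%:R * cos (heading s j) * speed.
Definition yrate j s := (alpha (signal s) j)%:R * sin (heading s j) * speed.
Definition xpos t j := x0 j + Rintegral mu `[0, t] (xrate j).
Definition ypos t j := y0 j + Rintegral mu `[0, t] (yrate j).

Definition partial_run k := run alpha r (take k acts) (x0, y0, th0).

Lemma duration_ge0 k : 0 <= duration k.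
Proof.
rewrite /duration; case: (ltnP k K) => kK; last by rewrite nth_default.
by apply: ltW; move/allP: acts_pos; apply; exact: mem_nth.
Qed.

Lemma speed_gt0 : 0 < speed.
Proof. by rewrite divr_gt0 // ltr_wpDl // sumr_ge0 // => k _; exact: duration_ge0. Qed.

Lemma switch_time0 : switch_time 0 = 0.
Proof. by rewrite /switch_time big_geq // mul0r. Qed.

Lemma switch_timeS k : switch_time k.+1 = switch_time k + duration k / speed.
Proof. by rewrite /switch_time big_nat_recr //= mulrDl. Qed.

Lemma le_switch_time k k' : (k <= k')%N -> switch_time k <= switch_time k'.
Proof.
move=> kk; rewrite /switch_time ler_wpM2r ?invr_ge0 ?(ltW speed_gt0) //.
rewrite (big_cat_nat (leq0n k) kk) /= lerDl.
by apply: sumr_ge0 => i _; exact: duration_ge0.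
Qed.

Lemma switch_time_ge0 k : 0 <= switch_time k.
Proof. by rewrite -switch_time0 le_switch_time. Qed.

Lemma switch_time_le_T : switch_time K <= T.
Proof.
rewrite /switch_time /speed ler_pdivrMr; last by rewrite -/speed speed_gt0.
by rewrite mulrCA divff ?gt_eqF // mulr1 lerDl.
Qed.

Lemma signal_piece k s : (k < K)%N -> ((0 < k)%N -> switch_time k < s) ->
  s <= switch_time k.+1 -> signal s = group_at k.
Proof.
move=> kK h1 h2; rewrite /signal count_map.
rewrite (eq_in_count (a2 := fun l => (l <= k)%N)); last first.
  move=> l; rewrite mem_iota => /andP[l1 _] /=; case: (leqP l k) => lk.
    by apply: le_lt_trans (le_switch_time lk) (h1 (leq_trans l1 lk)).
  by apply/negbTE; rewrite -leNgt (le_trans h2) // le_switch_time.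
by rewrite count_iota_le // ltnW.
Qed.

Lemma signal_switching : switching_signal T signal.
Proof.
exists [seq switch_time k | k <- iota 1 K] => t1 t2 _ t12 _ noswitch.
rewrite /signal; congr group_at; apply: eq_in_count => b /noswitch /=.
case: (ltP b t1) => bt1; first by rewrite (lt_le_trans bt1 t12).
by case: (ltP b t2) => // bt2 []; rewrite /= ltW.
Qed.

Lemma speed_admissible : admissible_input T (fun=> speed).
Proof.
split; [exact: measurable_cst | by move=> t _; rewrite speed_gt0 |].
have i0 : mu.-integrable `[0, 0] (EFin \o cst speed).
  by rewrite set_itv1; exact: integrable_set1.
by have [] := integral_extend_cst (lexx 0) (ltW T_gt0) i0 (fun _ _ => erefl).
Qed.

Lemma partial_runS k : (k < K)%N ->
  partial_run k.+1 = step alpha r (group_at k) (duration k) (partial_run k).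
Proof. by move=> kK; rewrite /partial_run (take_nth (ord0, 0)) // /run foldl_rcons. Qed.

Lemma stepE i t (s : state R n) j :
  [/\ (step alpha r i t s).1.1 j = s.1.1 j + (alpha i j)%:R * t * cos (s.2 j),
      (step alpha r i t s).1.2 j = s.1.2 j + (alpha i j)%:R * t * sin (s.2 j)
    & (step alpha r i t s).2 j = s.2 j + (1 - (alpha i j)%:R) * t / r].
Proof. by case: s => [[x y] th]. Qed.

Lemma heading_rate_piece k j s : (k < K)%N -> switch_time k < s <= switch_time k.+1 ->
  heading_rate j s = (1 - (alpha (group_at k) j)%:R) * speed / r.
Proof. by move=> kK /andP[s1 s2]; rewrite /heading_rate (signal_piece kK). Qed.

Lemma heading_at_switch k j : (k <= K)%N ->
  mu.-integrable `[0, switch_time k] (EFin \o heading_rate j) /\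
  heading (switch_time k) j = (partial_run k).2 j.
Proof.
elim: k => [_ | k IH kK].
  rewrite switch_time0 /heading set_itv1 Rintegral_set1 addr0.
  by split; [exact: integrable_set1 | rewrite /partial_run take0].
have [i E] := IH (ltnW kK).
have [iS ES] := integral_extend_cst (switch_time_ge0 k) (le_switch_time (leqnSn k)) i
  (fun s => heading_rate_piece j kK).
split => //; rewrite partial_runS //.
have [_ _ ->] := stepE (group_at k) (duration k) (partial_run k) j.
rewrite -E /heading ES switch_timeS.
by field; rewrite !gt_eqF ?speed_gt0.
Qed.

Lemma heading_on_piece k j s : (k < K)%N -> switch_time k <= s <= switch_time k.+1 ->
  heading s j = (partial_run k).2 j +
                (1 - (alpha (group_at k) j)%:R) * speed / r * (s - switch_time k).
Proof.
move=> kK /andP[s1 s2]; have [i E] := heading_at_switch j (ltnW kK).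
have rate t : switch_time k < t <= s ->
    heading_rate j t = (1 - (alpha (group_at k) j)%:R) * speed / r.
  by move=> /andP[t1 t2]; apply: heading_rate_piece kK _; rewrite t1 (le_trans t2 s2).
have [_ Es] := integral_extend_cst (switch_time_ge0 k) s1 i rate.
by rewrite -E /heading Es addrA.
Qed.

Lemma position_rates_piece k j s : (k < K)%N -> switch_time k < s <= switch_time k.+1 ->
  let a := (alpha (group_at k) j)%:R in
  xrate j s = a * cos ((partial_run k).2 j) * speed /\
  yrate j s = a * sin ((partial_run k).2 j) * speed.
Proof.
move=> kK /andP[s1 s2]; rewrite /xrate /yrate (signal_piece kK) //.
rewrite (heading_on_piece j kK) ?s2 ?ltW //.
by case: (alpha (group_at k) j); rewrite /= ?subrr ?mul0r ?addr0.
Qed.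

Lemma position_at_switch k j : (k <= K)%N ->
  [/\ mu.-integrable `[0, switch_time k] (EFin \o xrate j),
      mu.-integrable `[0, switch_time k] (EFin \o yrate j),
      xpos (switch_time k) j = (partial_run k).1.1 j &
      ypos (switch_time k) j = (partial_run k).1.2 j].
Proof.
elim: k => [_ | k IH kK].
  rewrite switch_time0 /xpos /ypos set_itv1 !Rintegral_set1 !addr0 /partial_run take0.
  by split => //; exact: integrable_set1.
have [ix iy Ex Ey] := IH (ltnW kK).
have b0 := switch_time_ge0 k; have bk := le_switch_time (leqnSn k).
have rates s hs := position_rates_piece j kK (s := s) hs.
have [ixS ExS] := integral_extend_cst b0 bk ix (fun s hs => (rates s hs).1).
have [iyS EyS] := integral_extend_cst b0 bk iy (fun s hs => (rates s hs).2).
rewrite partial_runS //.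
have [-> -> _] := stepE (group_at k) (duration k) (partial_run k) j.
split => //.
  by rewrite -Ex /xpos ExS switch_timeS; field; rewrite gt_eqF ?speed_gt0.
by rewrite -Ey /ypos EyS switch_timeS; field; rewrite gt_eqF ?speed_gt0.
Qed.

Lemma reachable_run : reachable alpha r x0 y0 th0 T
  (posmx (run alpha r acts (x0, y0, th0)).1.1 (run alpha r acts (x0, y0, th0)).1.2).
Proof.
exists signal, (fun=> speed), xpos, ypos, heading, (switch_time K); split.
- exact: signal_switching.
- exact: speed_admissible.
- by move=> t _ j; split.
- by rewrite switch_time_ge0 switch_time_le_T.
- congr posmx; apply/funext => j.
    by have [_ _ -> _] := position_at_switch j (leqnn K); rewrite /partial_run take_size.
  by have [_ _ _ ->] := position_at_switch j (leqnn K); rewrite /partial_run take_size.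
Qed.

End Realization.

Lemma exists_run_to (R : realType) n m (alpha : 'I_m.+1 -> 'I_n -> bool) (r : R) :
  0 < r -> standing_assumptions alpha -> forall x0 y0 th0 (p : 'M[R]_(n, 2)),
  exists2 acts, positive_acts acts &
    p = posmx (run alpha r acts (x0, y0, th0)).1.1 (run alpha r acts (x0, y0, th0)).1.2.
Proof.
move=> r_gt0 std x0 y0 th0 p; pose d j := (p j 0 - x0 j, p j 1 - y0 j).
have [acts pos E] := exists_translation_on r_gt0 std x0 y0 th0 d (enum_uniq 'I_n).
exists acts => //; apply/matrixP => j k; rewrite mxE; have [-> ->] := E j.
rewrite mem_enum /d /=.
by case: k => [[|[|//]]] ? /=; rewrite addrC subrK; congr (p j _); apply: val_inj.
Qed.

Lemma reachable_setT (R : realType) n m (alpha : 'I_m.+1 -> 'I_n -> bool) (r : R) :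
  0 < r -> standing_assumptions alpha -> forall x0 y0 th0 T, 0 < T ->
  reachable alpha r x0 y0 th0 T = setT.
Proof.
move=> r_gt0 std x0 y0 th0 T T_gt0; apply/seteqP; split => // p _.
have [acts pos ->] := exists_run_to r_gt0 std x0 y0 th0 p.
exact: reachable_run.
Qed.

Theorem mainTheorem6 (R : realType) (n m : nat)
  (alpha : 'I_m.+1 -> 'I_n -> bool) (r : R) :
  0 < r -> standing_assumptions alpha ->
  (forall (x0 y0 th0 : 'I_n -> R) (k : 'I_n) (v : R * R),
     exists acts : seq ('I_m.+1 * R),
       (forall a, a \in acts -> 0 < a.2) /\
       let: (x, y, _) := run alpha r acts (x0, y0, th0) in
       forall j : 'I_n,
         x j = x0 j + (if j == k then v.1 else 0) /\
         y j = y0 j + (if j == k then v.2 else 0)) /\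
  (forall x0 y0 th0 : 'I_n -> R, STLC_positions alpha r x0 y0 th0).
Proof.
move=> r_gt0 std; split => [x0 y0 th0 k v | x0 y0 th0 T T_gt0].
  have [acts pos E] := exists_single_translation r_gt0 std x0 y0 th0 k v.
  exists acts; split; first exact/allP.
  by case: (run _ _ _ _) E => [[x y] th] E j; apply: E.
by rewrite reachable_setT // interiorT.
Qed.
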